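(* For all integers $n$ define $B(n)=\sum_{k\in\mathbb{Z}}\binom{n}{k}^2\binom{n+k}{k}$. Then for all integers $n>0$, $B(-n) = (-1)^{n-1}B(n-1)$.
   Context: For all integers $n, k$, the binomial coefficient is defined by $\binom{n}{k} = \lim_{z \to 0} \frac{\Gamma(z+n+1)}{\Gamma(z+k+1)\Gamma(z+n-k+1)}$; this is a finite integer for all $n,k\in\mathbb{Z}$, agrees with the usual one for $n\ge0$, and satisfies $\binom{n}{k}=\binom{n}{n-k}$. For $n \ge 0$, $B(n)=\sum_{k=0}^n\binom{n}{k}^2\binom{n+k}{k}$. *)

From HB Require Import structures.
From mathcomp Require Import all_boot all_order all_algebra.
Set Implicit Arguments. Unset Strict Implicit. Unset Printing Implicit Defensive.
Import Order.TTheory GRing.Theory Num.Theory.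
Local Open Scope ring_scope.

(* Binomial coefficient binom(n,k) for all integers n, k, as given by
   lim_{z->0} Gamma(z+n+1) / (Gamma(z+k+1) Gamma(z+n-k+1)), written out
   explicitly case by case (Posz m = m >= 0, Negz m = -(m+1)):
   - n >= 0 :  usual binomial 'C(n,k) if k >= 0, and 0 if k < 0;
   - n < 0, k >= 0 :  (-1)^k * binom(-n+k-1, k);
   - n < 0, k <= n :  (-1)^(n-k) * binom(-k-1, n-k);
   - n < 0, n < k < 0 :  0. *)
Definition binz (n k : int) : int :=
  match n, k with
  | Posz n', Posz k' => ('C(n', k'))%:Z
  | Posz _, Negz _ => 0
  | Negz n', Posz k' => (-1) ^+ k' * ('C(n' + k', k'))%:Z
  | Negz n', Negz k' =>
      if (n' <= k')%N then (-1) ^+ (k' - n') * ('C(k', k' - n'))%:Z else 0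
  end.

Definition Bterm (n k : int) : int := binz n k ^+ 2 * binz (n + k) k.

(* The summand vanishes
   outside k in [0, |n|] (n >= 0) resp. [0, -n-1] (n < 0), so the sum over
   Z equals the finite sum over the window k in [-(|n|+1), |n|+1]. *)
Definition B (n : int) : int :=
  \sum_(i < (2 * `|n| + 3)%N) Bterm n (i%:Z - (`|n| + 1)%:Z).

From HB Require Import structures.
From mathcomp Require Import all_boot all_order all_algebra.
From mathcomp Require Import zify ring.
Import Order.TTheory GRing.Theory Num.Theory.
Local Open Scope ring_scope.

(* Write n = m+1.  Since binom(-m-1,k) = (-1)^k binom(m+k,k) and
   binom(-m-1+k,k) = (-1)^k binom(m,k), B(-m-1) is the finite sum
   sum_{k<=m} (-1)^k binom(m+k,k)^2 binom(m,k), so the theorem is the identity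
     sum_k (-1)^k binom(m+k,k)^2 binom(m,k) = (-1)^m sum_k binom(m,k)^2 binom(m+k,k).
   To prove it, expand one factor binom(m+k,k) = sum_j binom(m,j) binom(k,j)
   (Vandermonde) and exchange the sums; the inner sum over k is evaluated by
   trinomial revision and the finite-difference identity
     sum_i (-1)^i binom(p,i) binom(c+i,d+p) = (-1)^p binom(c,d). *)

Lemma trinomial_revision (j p i : nat) : (i <= p)%N ->
  ('C(j + p, j + i) * 'C(j + i, j) = 'C(j + p, j) * 'C(p, i))%N.
Proof.
move=> le_ip.
have fact_ji := bin_fact (leq_addr i j); rewrite addKn in fact_ji.
have fact_jp := bin_fact (leq_addr p j); rewrite addKn in fact_jp.
have fact_all := @bin_fact (j + p) (j + i).
rewrite subnDl leq_add2l in fact_all; have {}fact_all := fact_all le_ip.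
have fact_p := bin_fact le_ip.
have pos : (0 < j`! * i`! * (p - i)`!)%N by rewrite !muln_gt0 !fact_gt0.
apply/eqP; rewrite -(eqn_pmul2r pos); apply/eqP.
transitivity ('C(j + p, j + i) * ('C(j + i, j) * (j`! * i`!) * (p - i)`!))%N.
  by ring.
rewrite fact_ji fact_all -fact_jp -fact_p; ring.
Qed.

Lemma Vandermonde_diag (m k : nat) : (k <= m)%N ->
  'C(m + k, k) = (\sum_(j < m.+1) 'C(m, j) * 'C(k, j))%N.
Proof.
move=> le_km; rewrite -(binomial.Vandermonde m k k).
rewrite (big_ord_widen m.+1 (fun j => 'C(m, j) * 'C(k, k - j))%N) // big_mkcond /=.
apply: eq_bigr => -[j lt_jm] _ /=; case: ifP => [le_jk | /negbT gt_jk].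
  by rewrite bin_sub.
by rewrite (@bin_small k) ?muln0 //; lia.
Qed.

Section AlternatingSums.
Variable R : comPzRingType.

(* One step of the p-th finite difference: Pascal's rule applied to the
   weights binom(p+1,i). *)
Lemma alternating_pascal (p : nat) (g : nat -> R) :
  \sum_(i < p.+2) (-1) ^+ i * 'C(p.+1, i)%:R * g i
  = \sum_(i < p.+1) (-1) ^+ i * 'C(p, i)%:R * (g i - g i.+1).
Proof.
have extend : \sum_(i < p.+1) (-1) ^+ i * 'C(p, i)%:R * g i
            = \sum_(i < p.+2) (-1) ^+ i * 'C(p, i)%:R * g i.
  by rewrite [RHS]big_ord_recr /= bin_small // mulr0 mul0r addr0.
under [RHS]eq_bigr do rewrite mulrBr.
rewrite sumrB extend big_ord_recl [in RHS]big_ord_recl /= !bin0 -addrA.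
congr (_ + _); rewrite -sumrB; apply: eq_bigr => i _.
rewrite /bump /= add1n binS natrD exprS; ring.
Qed.

(* The p-th difference of x |-> binom(x, d+p) at c is (up to sign)
   binom(c, d), since each difference lowers the lower index by one. *)
Lemma alternating_binomial_difference (p c d : nat) :
  \sum_(i < p.+1) (-1) ^+ i * 'C(p, i)%:R * 'C(c + i, d + p)%:R
  = (-1) ^+ p * 'C(c, d)%:R :> R.
Proof.
elim: p => [|p IHp]; first by rewrite big_ord1 !addn0 bin0 mulr1.
rewrite (alternating_pascal p (fun i => 'C(c + i, d + p.+1)%:R)).
rewrite exprS mulN1r mulNr -IHp -sumrN.
apply: eq_bigr => i _; rewrite !addnS binS natrD; ring.
Qed.

(* The inner sum after expanding binom(m+k,k): only k >= j contribute, and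
   writing k = j+i it becomes an instance of the finite-difference identity. *)
Lemma alternating_trinomial_sum (m j : nat) : (j <= m)%N ->
  \sum_(k < m.+1) (-1) ^+ k * 'C(m + k, k)%:R * 'C(m, k)%:R * 'C(k, j)%:R
  = (-1) ^+ m * 'C(m, j)%:R * 'C(m + j, j)%:R :> R.
Proof.
move=> /subnKC <-; set p := (m - j)%N.
rewrite -addnS big_split_ord /= big1 ?add0r; last first.
  by move=> k _; rewrite (@bin_small k j) ?mulr0.
transitivity ((-1) ^+ j * 'C(j + p, j)%:R * \sum_(i < p.+1)
    (-1) ^+ i * 'C(p, i)%:R * 'C(j + j + p + i, j + p)%:R : R).
  rewrite mulr_sumr; apply: eq_bigr => -[i /= le_ip] _.
  rewrite -mulrA -natrM trinomial_revision // natrM.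
  rewrite -(@bin_sub (j + j + p + i) (j + p)); last by lia.
  rewrite (_ : j + j + p + i - (j + p) = j + i)%N; last by lia.
  rewrite (_ : j + j + p + i = j + p + (j + i))%N; last by lia.
  rewrite exprD; ring.
rewrite alternating_binomial_difference (_ : j + p + j = j + j + p)%N; last by lia.
rewrite exprD; ring.
Qed.

Lemma alternating_reflection (m : nat) :
  \sum_(k < m.+1) (-1) ^+ k * 'C(m + k, k)%:R ^+ 2 * 'C(m, k)%:R
  = (-1) ^+ m * \sum_(k < m.+1) 'C(m, k)%:R ^+ 2 * 'C(m + k, k)%:R :> R.
Proof.
transitivity (\sum_(k < m.+1) \sum_(j < m.+1) 'C(m, j)%:R *
   ((-1) ^+ k * 'C(m + k, k)%:R * 'C(m, k)%:R * 'C(k, j)%:R) : R).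
  apply: eq_bigr => -[k /= lt_km] _.
  rewrite expr2 {2}(Vandermonde_diag m k lt_km) natr_sum !mulr_sumr mulr_suml.
  by apply: eq_bigr => j _; rewrite natrM; ring.
rewrite exchange_big mulr_sumr; apply: eq_bigr => -[j /= lt_jm] _.
by rewrite -mulr_sumr alternating_trinomial_sum //; ring.
Qed.

End AlternatingSums.

Lemma sum_window (N M : nat) (F : int -> int) : (M <= N.+1)%N ->
  (forall k : nat, (M < k)%N -> F k = 0) -> (forall k : nat, F (Negz k) = 0) ->
  \sum_(i < (2 * N + 3)%N) F (i%:Z - (N + 1)%:Z) = \sum_(k < M.+1) F k.
Proof.
move=> le_MN F_right F_neg.
have -> : (2 * N + 3 = (N + 1) + (M.+1 + (N.+1 - M)))%N by lia.
rewrite big_split_ord /= big1 ?add0r => [|i _]; last first.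
  by rewrite (_ : _ - _ = Negz (N - i)) ?F_neg // NegzE /=; have := ltn_ord i; lia.
have shift (k : nat) : (N + 1 + k)%:Z - (N + 1)%:Z = k.
  by rewrite PoszD addrC addKr.
rewrite big_split_ord /= [X in _ + X]big1 ?addr0 => [|i _].
  by apply: eq_bigr => i _; rewrite shift.
by rewrite shift F_right // ltnS leq_addr.
Qed.

Lemma B_nonneg (m : nat) :
  B m = \sum_(k < m.+1) 'C(m, k)%:R ^+ 2 * 'C(m + k, k)%:R.
Proof.
rewrite /B /= (@sum_window m m (Bterm m)) //.
- by apply: eq_bigr => k _; rewrite /Bterm -PoszD /= !natz.
- by move=> k lt_mk; rewrite /Bterm /= bin_small // expr0n mul0r.
- by move=> k; rewrite /Bterm /= expr0n mul0r.
Qed.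

(* For n = -m-1 the summand is supported in 0 <= k <= m, where
   binz(-m-1,k) = (-1)^k binom(m+k,k) and binz(-m-1+k,k) = (-1)^k binom(m,k). *)
Lemma B_negative (m : nat) :
  B (Negz m) = \sum_(k < m.+1) (-1) ^+ k * 'C(m + k, k)%:R ^+ 2 * 'C(m, k)%:R.
Proof.
rewrite /B /= (@sum_window m.+1 m _ (leqW (leqnSn m))).
- apply: eq_bigr => -[k /= le_km] _; rewrite /Bterm.
  have -> : Negz m + k = Negz (m - k) by rewrite !NegzE; lia.
  by rewrite /= subnK // !natz exprMn sqrr_sign mul1r mulrCA mulrA.
- move=> k lt_mk; rewrite /Bterm.
  have -> : Negz m + k = Posz (k - m.+1) by rewrite NegzE addrC subzn.
  by rewrite /= (@bin_small (k - m.+1)) ?mulr0 //; lia.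
- move=> k; rewrite /Bterm.
  have -> : Negz m + Negz k = Negz (m + k).+1 by rewrite !NegzE; lia.
  by rewrite /= ltnNge leq_addl mulr0.
Qed.

Theorem mainTheorem7 (n : int) (hn : 0 < n) :
  B (- n) = (-1) ^+ (`|n| - 1)%N * B (n - 1).
Proof.
case: n hn => [[|m]|m] // _.
have -> : - Posz m.+1 = Negz m by rewrite NegzE.
have -> : Posz m.+1 - 1 = Posz m by rewrite -addn1 PoszD addrK.
by rewrite /= subn1 /= B_negative B_nonneg alternating_reflection.
Qed.
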